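(* Suppose $\beta_n \phi^+_n \phi^-_n \to 0$. Then for any non-trivial solution $\psi_n = a^+_n \phi^+_n + a^-_n \phi^-_n$ of $(-\Delta+V)\psi=0$ with $a^\pm_n$ satisfying the recurrence $\begin{pmatrix} a^+_{n+1}\\ a^-_{n+1}\end{pmatrix} = (I+M_n)\begin{pmatrix} a^+_{n}\\ a^-_{n}\end{pmatrix}$, one of the following must be true: (1) Given any integer $N$, there is an integer $p>N$ such that both $a^+_p$ and $a^-_p$ are non-zero. (2) There is an integer $p_0$ such that $a^+_{p_0+k} = a^+_{p_0} \neq 0$ and $a^-_{p_0+k} = 0$ for all $k \geq 0$. (3) There is an integer $p_0$ such that $a^-_{p_0+k} = a^-_{p_0} \neq 0$ and $a^+_{p_0+k} = 0$ for all $k \geq 0$.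
   Context: On the positive integers, $(\Delta f)_n = f_{n+1}+f_{n-1}-2f_n$; $V, V^0$ are real potentials, $\phi^\pm$ are independent solutions of $(-\Delta+V^0)\phi=0$ with Wronskian $W=\phi^-_n\phi^+_{n+1}-\phi^-_{n+1}\phi^+_n$, and $\beta_n=(V_n-V^0_n)/W$. Solutions $\psi$ of $(-\Delta+V)\psi=0$ are represented as $\psi_n=a^+_n\phi^+_n+a^-_n\phi^-_n$ where the coefficients satisfy $(\nabla^-a^+_n)\phi^+_{n-1}+(\nabla^-a^-_n)\phi^-_{n-1}=0$ (with $\nabla^-f_n=f_n-f_{n-1}$, $\phi^\pm_0=0$) and the recurrence with $M_n := \beta_n\begin{pmatrix}\phi^+_n\phi^-_n & (\phi^-_n)^2\\ -(\phi^+_n)^2 & -\phi^+_n\phi^-_n\end{pmatrix}$. *)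

(* concrete reals R. Sequences on the positive integers are
   modelled as nat -> R; only indices n >= 1 are meaningful. *)
From Stdlib Require Import Reals Lra Lia.
Open Scope R_scope.

Definition Delta (f : nat -> R) (n : nat) : R :=
  f (S n) + f (pred n) - 2 * f n.

(* f solves (-Delta + V) f = 0 at every interior point n >= 2
   (so that f_{n-1} is a point of the positive integers). *)
Definition is_solution (V f : nat -> R) : Prop :=
  forall n : nat, (2 <= n)%nat -> - Delta f n + V n * f n = 0.

Definition lin_indep (f g : nat -> R) : Prop :=
  forall c1 c2 : R, (forall n : nat, (1 <= n)%nat -> c1 * f n + c2 * g n = 0) ->
    c1 = 0 /\ c2 = 0.

(* Wronskian W = phi^-_n phi^+_{n+1} - phi^-_{n+1} phi^+_n (constant in n for
   solutions; evaluated at n = 1). *)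
Definition wronskian (phip phim : nat -> R) : R :=
  phim 1%nat * phip 2%nat - phim 2%nat * phip 1%nat.

Definition beta (V V0 phip phim : nat -> R) (n : nat) : R :=
  (V n - V0 n) / wronskian phip phim.

Definition M11 V V0 phip phim n := beta V V0 phip phim n * (phip n * phim n).
Definition M12 V V0 phip phim n := beta V V0 phip phim n * (phim n ^ 2).
Definition M21 V V0 phip phim n := - (beta V V0 phip phim n * (phip n ^ 2)).
Definition M22 V V0 phip phim n := - (beta V V0 phip phim n * (phip n * phim n)).

(* If both coefficients vanished at some index, the recurrence would keep them
   zero from then on, so psi would vanish on a tail; since psi solves a
   second-order recurrence it is then zero everywhere.  Hence, if (1) fails,
   from some index on exactly one coefficient is non-zero.  Eventually
   |beta_n phi+_n phi-_n| < 1, so the diagonal entries of I + M_n are non-zero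
   and the non-zero coefficient stays non-zero; the vanishing of the other one
   then forces beta_n (phi+_n)^2 = 0 (resp. beta_n (phi-_n)^2 = 0), which kills
   the whole of M_n on that coefficient, so it is constant. *)

From Pilot Require Import Defs.
From Stdlib Require Import Reals Lra Lia Classical.
Open Scope R_scope.

Lemma solution_vanishing_on_tail (V f : nat -> R) (p : nat) :
  is_solution V f -> (forall m, (p <= m)%nat -> f m = 0) ->
  forall n, (1 <= n)%nat -> f n = 0.
Proof.
  intros Hf Htail.
  assert (Hdown : forall k n, (1 <= n)%nat -> (p <= n + k)%nat -> f n = 0).
  { induction k as [|k IH]; intros n Hn Hnk.
    - apply Htail; lia.
    - destruct (Compare_dec.le_lt_dec p (n + k)) as [Hle|Hlt]; [apply IH; lia|].
      assert (E1 : f (S n) = 0) by (apply IH; lia).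
      assert (E2 : f (S (S n)) = 0) by (apply IH; lia).
      pose proof (Hf (S n) ltac:(lia)) as Hs.
      unfold Defs.Delta in Hs; simpl pred in Hs.
      rewrite E1, E2 in Hs; lra. }
  intros n Hn; apply (Hdown p n); lia.
Qed.

Lemma Rmult_sqr_eq0_mul (b x y : R) : b * x ^ 2 = 0 -> b * (x * y) = 0.
Proof.
  intros H; apply Rmult_integral in H as [->|H]; [ring|].
  replace x with 0 by nra; ring.
Qed.

Section CoefficientRecurrence.

Variables (b phip phim ap am : nat -> R).

Hypothesis Hrec : forall n : nat, (1 <= n)%nat ->
  ap (S n) = (1 + b n * (phip n * phim n)) * ap n + b n * phim n ^ 2 * am n /\
  am (S n) = - (b n * phip n ^ 2) * ap n + (1 + - (b n * (phip n * phim n))) * am n.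

Lemma coeffs_vanish_from (p : nat) : (1 <= p)%nat -> ap p = 0 -> am p = 0 ->
  forall m, (p <= m)%nat -> ap m = 0 /\ am m = 0.
Proof.
  intros Hp Ha Hm m Hpm.
  replace m with (p + (m - p))%nat by lia.
  induction (m - p)%nat as [|k [IHa IHm]]; [rewrite Nat.add_0_r; auto|].
  replace (p + S k)%nat with (S (p + k)) by lia.
  destruct (Hrec (p + k) ltac:(lia)) as [-> ->].
  rewrite IHa, IHm; split; ring.
Qed.

Lemma coeffs_not_both_zero (V psi : nat -> R) (p : nat) :
  is_solution V psi -> (exists n, (1 <= n)%nat /\ psi n <> 0) ->
  (forall n, (1 <= n)%nat -> psi n = ap n * phip n + am n * phim n) ->
  (1 <= p)%nat -> ~ (ap p = 0 /\ am p = 0).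
Proof.
  intros Hpsi [n [Hn Hpsin]] Hrepr Hp [Ha Hm].
  apply Hpsin, (solution_vanishing_on_tail V psi p Hpsi); [|exact Hn].
  intros m Hpm.
  rewrite Hrepr by lia.
  destruct (coeffs_vanish_from p Hp Ha Hm m Hpm) as [-> ->]; ring.
Qed.

Lemma plus_mode_step (p : nat) : (1 <= p)%nat ->
  Rabs (b p * phip p * phim p) < 1 -> ap p <> 0 -> am p = 0 ->
  ap (S p) = 0 \/ am (S p) = 0 -> ap (S p) = ap p /\ am (S p) = 0.
Proof.
  intros Hp Hsmall Ha Hm Hnext.
  destruct (Hrec p Hp) as [Ra Rm]; rewrite Hm in Ra, Rm.
  assert (Hdiag : 1 + b p * (phip p * phim p) <> 0).
  { rewrite <- Rmult_assoc; intro E.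
    replace (b p * phip p * phim p) with (-1) in Hsmall by lra.
    rewrite Rabs_left in Hsmall by lra; lra. }
  assert (Hm' : am (S p) = 0).
  { destruct Hnext as [E|E]; [|exact E].
    rewrite Ra, Rmult_0_r, Rplus_0_r in E.
    apply Rmult_integral in E as [E|E]; contradiction. }
  split; [|exact Hm'].
  assert (Hb : b p * phip p ^ 2 = 0).
  { apply (Rmult_eq_reg_r (ap p)); [lra|exact Ha]. }
  rewrite Ra, (Rmult_sqr_eq0_mul _ _ _ Hb); ring.
Qed.

Lemma plus_mode_persists (p0 : nat) : (1 <= p0)%nat ->
  (forall n, (p0 <= n)%nat -> Rabs (b n * phip n * phim n) < 1) ->
  (forall n, (p0 <= n)%nat -> ap n = 0 \/ am n = 0) ->
  ap p0 <> 0 -> am p0 = 0 ->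
  forall k, ap (p0 + k)%nat = ap p0 /\ am (p0 + k)%nat = 0.
Proof.
  intros Hp0 Hsmall Hone Ha Hm k.
  induction k as [|k [IHa IHm]]; [rewrite Nat.add_0_r; auto|].
  replace (p0 + S k)%nat with (S (p0 + k)) by lia.
  rewrite <- IHa.
  apply plus_mode_step; [lia|apply Hsmall; lia|congruence|exact IHm|apply Hone; lia].
Qed.

End CoefficientRecurrence.

(* The recurrence is symmetric under (a+, a-, phi+, phi-, beta) |->
   (a-, a+, phi-, phi+, -beta). *)
Lemma minus_mode_persists (b phip phim ap am : nat -> R) (p0 : nat) :
  (forall n : nat, (1 <= n)%nat ->
    ap (S n) = (1 + b n * (phip n * phim n)) * ap n + b n * phim n ^ 2 * am n /\
    am (S n) = - (b n * phip n ^ 2) * ap n + (1 + - (b n * (phip n * phim n))) * am n) ->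
  (1 <= p0)%nat ->
  (forall n, (p0 <= n)%nat -> Rabs (b n * phip n * phim n) < 1) ->
  (forall n, (p0 <= n)%nat -> ap n = 0 \/ am n = 0) ->
  am p0 <> 0 -> ap p0 = 0 ->
  forall k, am (p0 + k)%nat = am p0 /\ ap (p0 + k)%nat = 0.
Proof.
  intros Hrec Hp0 Hsmall Hone.
  apply (plus_mode_persists (fun n => - b n) phim phip am ap); [|exact Hp0| |].
  - intros n Hn; destruct (Hrec n Hn) as [Ra Rm]; rewrite Ra, Rm; split; ring.
  - intros n Hn; replace (- b n * phim n * phip n) with (- (b n * phip n * phim n))
      by ring; rewrite Rabs_Ropp; auto.
  - intros n Hn; destruct (Hone n Hn); auto.
Qed.

Theorem proposition1
  (V V0 phip phim psi ap am : nat -> R)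
  (Hphip : is_solution V0 phip)
  (Hphim : is_solution V0 phim)
  (Hindep : lin_indep phip phim)
  (Hlim : Un_cv (fun n => beta V V0 phip phim n * phip n * phim n) 0)
  (Hpsi : is_solution V psi)
  (Hnontriv : exists n : nat, (1 <= n)%nat /\ psi n <> 0)
  (Hrepr : forall n : nat, (1 <= n)%nat -> psi n = ap n * phip n + am n * phim n)
  (Hgauge : forall n : nat, (2 <= n)%nat ->
     (ap n - ap (pred n)) * phip (pred n) + (am n - am (pred n)) * phim (pred n) = 0)
  (Hrec : forall n : nat, (1 <= n)%nat ->
     ap (S n) = (1 + M11 V V0 phip phim n) * ap n + M12 V V0 phip phim n * am n /\
     am (S n) = M21 V V0 phip phim n * ap n + (1 + M22 V V0 phip phim n) * am n) :
  (forall N : nat, exists p : nat, (N < p)%nat /\ ap p <> 0 /\ am p <> 0)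
  \/ (exists p0 : nat, (1 <= p0)%nat /\ ap p0 <> 0 /\
        forall k : nat, ap (p0 + k)%nat = ap p0 /\ am (p0 + k)%nat = 0)
  \/ (exists p0 : nat, (1 <= p0)%nat /\ am p0 <> 0 /\
        forall k : nat, am (p0 + k)%nat = am p0 /\ ap (p0 + k)%nat = 0).
Proof.
  set (b := beta V V0 phip phim) in *.
  destruct (classic (forall N, exists p, (N < p)%nat /\ ap p <> 0 /\ am p <> 0))
    as [Hmixed|Hmixed]; [left; exact Hmixed|right].
  apply not_all_ex_not in Hmixed as [N HN].
  destruct (Hlim 1 Rlt_0_1) as [N' HN'].
  set (K := S (Nat.max N N')).
  assert (Hsmall : forall n, (K <= n)%nat -> Rabs (b n * phip n * phim n) < 1).
  { intros n Hn; pose proof (HN' n ltac:(lia)) as H.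
    unfold R_dist in H; rewrite Rminus_0_r in H; exact H. }
  assert (Hone : forall n, (K <= n)%nat -> ap n = 0 \/ am n = 0).
  { intros n Hn; apply NNPP; intro Hboth; apply HN; exists n.
    split; [lia|]; split; intro E; apply Hboth; auto. }
  pose proof (coeffs_not_both_zero b phip phim ap am Hrec V psi K
                Hpsi Hnontriv Hrepr ltac:(lia)) as HK.
  destruct (Hone K (le_n K)) as [Ha|Hm].
  - right; exists K; split; [lia|]; split; [intro; tauto|].
    exact (minus_mode_persists b phip phim ap am K Hrec ltac:(lia) Hsmall Hone
             ltac:(intro; tauto) Ha).
  - left; exists K; split; [lia|]; split; [intro; tauto|].
    exact (plus_mode_persists b phip phim ap am Hrec K ltac:(lia) Hsmall Hone
             ltac:(intro; tauto) Hm).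
Qed.
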